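(* Let $a>0$ and $0\le\rho<1$. There exists a constant $c=c(a,\rho)>0$ such that every probability measure $\nu$ on $\mathbb{Z}$ with $m_1(\nu)=\sum_k|k|\nu(k)\le a$ and $\nu(\beta\mathbb{Z}+r)\le\rho$ for all integers $\beta\notin\{1,-1\}$ and all $r\in\mathbb{Z}$ (with $0\cdot\mathbb{Z}+r=\{r\}$) satisfies $|\hat{\nu}(t)|\le e^{-ct^2}$ for all $t\in(-1/2,1/2]$.
   Context: The Fourier transform of a probability measure $\nu$ on $\mathbb{Z}$ is $\hat{\nu}(t)=\sum_{k\in\mathbb{Z}}\nu(k)e^{2\pi ikt}$. *)

From Stdlib Require Import Reals ZArith Znumtheory.
Open Scope R_scope.

Definition zpartial (f : Z -> R) (N : nat) : R :=
  sum_f_R0 (fun n => f (Z.of_nat n - Z.of_nat N)%Z) (2 * N).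

(* f is summable over Z with sum l (limit of symmetric partial sums; all
   series used below have nonnegative or absolutely summable terms). *)
Definition has_zsum (f : Z -> R) (l : R) : Prop := Un_cv (zpartial f) l.

Definition prob_measure_Z (nu : Z -> R) : Prop :=
  (forall k, 0 <= nu k) /\ has_zsum nu 1.

(* indicator-weighted mass function of the coset  beta Z + r
   (for beta = 0, Z.divide 0 (k - r) <-> k = r, i.e. the set {r}). *)
Definition coset_restrict (nu : Z -> R) (beta r : Z) : Z -> R :=
  fun k => if Zdivide_dec beta (k - r) then nu k else 0.

Definition coset_mass (nu : Z -> R) (beta r : Z) (m : R) : Prop :=
  has_zsum (coset_restrict nu beta r) m.

Definition first_moment (nu : Z -> R) (m : R) : Prop :=
  has_zsum (fun k => Rabs (IZR k) * nu k) m.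

(* real and imaginary parts of  hat nu(t) = sum_k nu(k) e^{2 pi i k t} *)
Definition fourier_re (nu : Z -> R) (t : R) : Z -> R :=
  fun k => nu k * cos (2 * PI * IZR k * t).
Definition fourier_im (nu : Z -> R) (t : R) : Z -> R :=
  fun k => nu k * sin (2 * PI * IZR k * t).

From Stdlib Require Import Reals ZArith Znumtheory Lra Lia Psatz Classical.
Open Scope R_scope.

(* Write [hat nu(t) = |hat nu(t)| e^{2 pi i phi}].  Then
   [1 - |hat nu(t)| = sum_k nu(k) (1 - cos (2 pi (k t - phi)))], and a term is at least
   [2 e^2 t^2 nu(k)] as soon as [k t - phi] is at distance [>= e |t|] from the integers.
   By the first moment bound (Markov), mass [>= (1 + rho)/2] sits on [|k| <= M] with [M]
   depending only on [a] and [rho].  A pigeonhole argument over geometrically growing scales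
   shows that the [|k| <= M] with [k t] close to [phi] mod 1 all have differences
   divisible by a single [b <> 1, -1] ([b = 0] allowed), so they lie in one coset
   [b Z + r] of mass [<= rho]; the remaining mass [>= (1 - rho)/2] gives the bound
   [|hat nu(t)| <= 1 - c t^2 <= exp (- c t^2)]. *)

Lemma zpartial_S f N :
  zpartial f (S N) = zpartial f N + f (Z.of_nat (S N)) + f (- Z.of_nat (S N))%Z.
Proof.
  unfold zpartial.
  replace (2 * S N)%nat with (S (S (2 * N))) by lia.
  rewrite decomp_sum by lia. change (pred (S (S (2 * N)))) with (S (2 * N)).
  rewrite tech5.
  rewrite (sum_eq (fun i => f (Z.of_nat (S i) - Z.of_nat (S N))%Z)
                  (fun n => f (Z.of_nat n - Z.of_nat N)%Z)).
  2: { intros i _. f_equal. lia. }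
  replace (Z.of_nat 0 - Z.of_nat (S N))%Z with (- Z.of_nat (S N))%Z by lia.
  replace (Z.of_nat (S (S (2 * N))) - Z.of_nat (S N))%Z with (Z.of_nat (S N)) by lia.
  ring.
Qed.

Lemma zpartial_le_on f g N :
  (forall k, (Z.abs k <= Z.of_nat N)%Z -> f k <= g k) -> zpartial f N <= zpartial g N.
Proof. intros H; unfold zpartial; apply sum_Rle; intros n Hn; apply H; lia. Qed.

Lemma zpartial_le f g N : (forall k, f k <= g k) -> zpartial f N <= zpartial g N.
Proof. intros H; apply zpartial_le_on; auto. Qed.

Lemma zpartial_ext f g N : (forall k, f k = g k) -> zpartial f N = zpartial g N.
Proof. intros H; unfold zpartial; apply sum_eq; intros; apply H. Qed.

Lemma zpartial_minus f g N : zpartial (fun k => f k - g k) N = zpartial f N - zpartial g N.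
Proof. unfold zpartial; apply minus_sum. Qed.

Lemma zpartial_scal f c N : zpartial (fun k => c * f k) N = c * zpartial f N.
Proof. unfold zpartial; rewrite scal_sum; apply sum_eq; intros; ring. Qed.

Lemma zpartial_growing f : (forall k, 0 <= f k) -> Un_growing (zpartial f).
Proof.
  intros H n. rewrite zpartial_S.
  pose proof (H (Z.of_nat (S n))); pose proof (H (- Z.of_nat (S n))%Z). lra.
Qed.

Lemma zpartial_nonneg f N : (forall k, 0 <= f k) -> 0 <= zpartial f N.
Proof.
  intros H. induction N as [|N IH].
  - unfold zpartial; simpl; apply H.
  - pose proof (zpartial_growing f H N). lra.
Qed.

Lemma zpartial_mono f N N' :
  (forall k, 0 <= f k) -> (N <= N')%nat -> zpartial f N <= zpartial f N'.
Proof.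
  intros H Hle. induction Hle as [|N' _ IH]; [lra|].
  pose proof (zpartial_growing f H N'). lra.
Qed.

Lemma zpartial_sub_le_outside f g M N : (M <= N)%nat ->
  (forall k, (Z.of_nat M < Z.abs k)%Z -> f k <= g k) ->
  zpartial f N - zpartial f M <= zpartial g N - zpartial g M.
Proof.
  intros Hle H. induction Hle as [|N HMN IH]; [lra|].
  rewrite !zpartial_S.
  pose proof (H (Z.of_nat (S N)) ltac:(lia)). pose proof (H (- Z.of_nat (S N))%Z ltac:(lia)).
  lra.
Qed.

Lemma Un_cv_const c : Un_cv (fun _ => c) c.
Proof. intros e He. exists 0%nat. intros. unfold Rdist. rewrite Rminus_diag, Rabs_R0. auto. Qed.

Lemma has_zsum_le_bound f l B : has_zsum f l -> (forall N, zpartial f N <= B) -> l <= B.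
Proof. intros Hs HB. exact (Rle_cv_lim HB Hs (Un_cv_const B)). Qed.

Lemma zpartial_le_has_zsum f l N : (forall k, 0 <= f k) -> has_zsum f l -> zpartial f N <= l.
Proof. intros H Hs. apply growing_ineq; auto. apply zpartial_growing; auto. Qed.

Lemma has_zsum_nonneg f l : (forall k, 0 <= f k) -> has_zsum f l -> 0 <= l.
Proof. intros H Hs. apply Rle_trans with (zpartial f 0); [apply zpartial_nonneg|apply zpartial_le_has_zsum]; auto. Qed.

Lemma has_zsum_of_bounded f B : (forall k, 0 <= f k) -> (forall N, zpartial f N <= B) ->
  exists l, has_zsum f l.
Proof.
  intros H HB. destruct (growing_cv (zpartial f)) as [l Hl].
  - apply zpartial_growing; auto.
  - exists B. intros x [N ->]. apply HB.
  - exists l; exact Hl.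
Qed.

Lemma has_zsum_minus_scal f g c l1 l2 : has_zsum f l1 -> has_zsum g l2 ->
  has_zsum (fun k => f k - c * g k) (l1 - c * l2).
Proof.
  intros H1 H2. unfold has_zsum.
  eapply Un_cv_ext; [|exact (CV_minus _ _ _ _ H1 (CV_mult _ _ _ _ (Un_cv_const c) H2))].
  intros n. simpl. rewrite zpartial_minus, zpartial_scal. reflexivity.
Qed.

(* Split [f] into the nonnegative parts [(nu + f)/2] and [(nu - f)/2]. *)
Lemma has_zsum_dominated f nu : prob_measure_Z nu -> (forall k, Rabs (f k) <= nu k) ->
  exists l, has_zsum f l.
Proof.
  intros [Hnn Hs] Hd.
  assert (Hb : forall N, zpartial nu N <= 1) by (intros; apply zpartial_le_has_zsum; auto).
  assert (Hf : forall k, - nu k <= f k <= nu k).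
  { intros k. pose proof (Hd k). pose proof (Rle_abs (f k)). pose proof (Rle_abs (- f k)).
    rewrite Rabs_Ropp in *. lra. }
  destruct (has_zsum_of_bounded (fun k => (nu k + f k) / 2) 1) as [l1 H1].
  { intros k. pose proof (Hf k). lra. }
  { intros N. apply Rle_trans with (zpartial nu N); auto.
    apply zpartial_le. intros k. pose proof (Hf k). lra. }
  destruct (has_zsum_of_bounded (fun k => (nu k - f k) / 2) 1) as [l2 H2].
  { intros k. pose proof (Hf k). lra. }
  { intros N. apply Rle_trans with (zpartial nu N); auto.
    apply zpartial_le. intros k. pose proof (Hf k). lra. }
  exists (l1 - 1 * l2). eapply Un_cv_ext; [|exact (has_zsum_minus_scal _ _ 1 _ _ H1 H2)].
  intros n. simpl. apply zpartial_ext. intros; field.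
Qed.

Lemma cos_period_Z x z : cos (x + 2 * IZR z * PI) = cos x.
Proof.
  destruct (Z_le_gt_dec 0 z) as [Hz|Hz].
  - rewrite <- (Z2Nat.id z Hz), <- INR_IZR_INZ. apply cos_period.
  - rewrite <- (cos_period (x + 2 * IZR z * PI) (Z.to_nat (- z))).
    rewrite INR_IZR_INZ, Z2Nat.id, opp_IZR by lia. f_equal. ring.
Qed.

(* The degree-5 Taylor lower bound [sin_lb] of [SIN] already suffices. *)
Lemma sin_ge_third v : 0 <= v -> v <= PI / 2 -> v / 3 <= sin v.
Proof.
  intros H0 H1. pose proof PI_4.
  destruct (SIN v H0 ltac:(lra)) as [Hl _].
  eapply Rle_trans; [|exact Hl].
  unfold sin_lb, sin_approx, sin_term. simpl.
  assert (v <= 2) by lra.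
  assert (v * v <= 4) by nra.
  assert (0 <= v * v) by nra.
  assert (v * v * (v * v) <= 16) by nra.
  assert (0 <= v * (v * v * (v * v))) by nra.
  assert (v * (v * v * (v * v)) * (v * v) <= v * (v * v * (v * v)) * 4) by nra.
  assert (v * (v * v) <= 4 * v) by nra.
  field_simplify. nra.
Qed.

Lemma one_sub_cos_ge y e : 0 <= e -> (forall n : Z, e <= Rabs (y - IZR n)) ->
  2 * e ^ 2 <= 1 - cos (2 * PI * y).
Proof.
  intros He Hfar.
  set (z := (up (y + 1/2) - 1)%Z).
  destruct (archimed (y + 1/2)) as [A1 A2].
  assert (Hz : IZR z = IZR (up (y + 1/2)) - 1) by (unfold z; rewrite minus_IZR; reflexivity).
  set (u := y - IZR z).
  assert (Hu : Rabs u <= 1/2) by (apply Rabs_le; unfold u; lra).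
  assert (Heu : e <= Rabs u) by apply Hfar.
  replace (2 * PI * y) with (2 * (PI * u) + 2 * IZR z * PI) by (unfold u; ring).
  rewrite cos_period_Z, cos_2a_sin.
  assert (Hs : sin (PI * u) * sin (PI * u) = sin (PI * Rabs u) * sin (PI * Rabs u)).
  { unfold Rabs; destruct (Rcase_abs u); [|reflexivity].
    replace (PI * - u) with (- (PI * u)) by ring. rewrite sin_neg; ring. }
  pose proof PI2_3_2. pose proof (Rabs_pos u).
  pose proof (sin_ge_third (PI * Rabs u) ltac:(nra) ltac:(nra)).
  assert (Rabs u <= sin (PI * Rabs u)) by nra.
  nra.
Qed.

Lemma exists_phase x y : exists th, cos th * x + sin th * y = sqrt (x ^ 2 + y ^ 2).
Proof.
  set (R0 := sqrt (x ^ 2 + y ^ 2)).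
  assert (HR2 : R0 * R0 = x ^ 2 + y ^ 2) by (apply sqrt_sqrt; nra).
  destruct (Req_dec R0 0) as [E|E].
  { exists 0. rewrite E, cos_0, sin_0. rewrite E in HR2. nra. }
  assert (HR : 0 < R0) by (pose proof (sqrt_pos (x ^ 2 + y ^ 2)) as Hp; fold R0 in Hp; lra).
  set (c := x / R0).
  assert (Hc : -1 <= c <= 1).
  { unfold c. split; [apply Rmult_le_reg_r with R0|apply Rmult_le_reg_r with R0]; auto;
      field_simplify; nra. }
  assert (Hs : sqrt (1 - c²) = Rabs (y / R0)).
  { rewrite <- sqrt_Rsqr_abs. f_equal. unfold c, Rsqr.
    apply Rmult_eq_reg_r with (R0 * R0); [|nra].
    field_simplify; [|lra|lra]. replace (R0 ^ 2) with (R0 * R0) by ring. rewrite HR2. ring. }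
  assert (Hyth : forall th, cos th = c -> sin th = y / R0 -> cos th * x + sin th * y = R0).
  { intros th -> ->. unfold c. apply Rmult_eq_reg_l with R0; [|lra].
    field_simplify; [|lra]. replace (R0 ^ 2) with (R0 * R0) by ring. rewrite HR2. ring. }
  destruct (Rle_lt_dec 0 y).
  - exists (acos c). apply Hyth; [apply cos_acos; auto|].
    rewrite sin_acos, Hs by auto. apply Rabs_pos_eq. unfold Rdiv. pose proof (Rinv_0_lt_compat R0 HR). nra.
  - exists (- acos c). apply Hyth; [rewrite cos_neg; apply cos_acos; auto|].
    rewrite sin_neg, sin_acos, Hs by auto. rewrite Rabs_left; [ring|].
    apply Rmult_lt_reg_r with R0; auto. field_simplify; lra.
Qed.

Definition near_int (t e : R) (d : Z) : Prop := exists n : Z, Rabs (IZR d * t - IZR n) < e.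

Lemma near_int_weaken t e e' d : e <= e' -> near_int t e d -> near_int t e' d.
Proof. intros H [n Hn]. exists n. lra. Qed.

Lemma near_int_opp t e d : near_int t e d -> near_int t e (- d).
Proof.
  intros [n Hn]. exists (- n)%Z. rewrite !opp_IZR.
  replace (- IZR d * t - - IZR n) with (- (IZR d * t - IZR n)) by ring.
  rewrite Rabs_Ropp. exact Hn.
Qed.

Lemma near_int_sub_mul t e1 e2 d b q : near_int t e1 d -> near_int t e2 b ->
  near_int t (e1 + IZR (Z.abs q) * e2) (d - q * b).
Proof.
  intros [n1 H1] [n2 H2]. exists (n1 - q * n2)%Z.
  rewrite !minus_IZR, !mult_IZR.
  replace ((IZR d - IZR q * IZR b) * t - (IZR n1 - IZR q * IZR n2))
    with ((IZR d * t - IZR n1) + (- IZR q) * (IZR b * t - IZR n2)) by ring.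
  eapply Rle_lt_trans; [apply Rabs_triang|].
  rewrite Rabs_mult, Rabs_Ropp, <- abs_IZR.
  pose proof (IZR_le 0 (Z.abs q) ltac:(lia)). pose proof (Rabs_pos (IZR b * t - IZR n2)).
  nra.
Qed.

Lemma Rabs_le_dist_int y n : Rabs y <= 1/2 -> Rabs y <= Rabs (y - IZR n).
Proof.
  intros Hy. destruct (Z.eq_dec n 0) as [->|Hn].
  - rewrite Rminus_0_r. lra.
  - assert (1 <= Rabs (IZR n)) by (rewrite <- abs_IZR; apply IZR_le; lia).
    pose proof (Rabs_triang_inv (IZR n) y).
    replace (IZR n - y) with (- (y - IZR n)) in * by ring. rewrite Rabs_Ropp in *. lra.
Qed.

(* Euclidean division of [d] by [b]: the remainder [d - q b] is near an integer at
   scale [(L + 1) e], since [|q| <= L]; minimality of [b] forces it to vanish. *)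
Lemma near_int_divides t L e b d : 0 <= e -> (1 <= b <= L)%Z -> near_int t e b ->
  (forall r, (1 <= r < b)%Z -> ~ near_int t (IZR (L + 1) * e) r) ->
  (Z.abs d <= L)%Z -> near_int t e d -> (b | d)%Z.
Proof.
  intros He Hb Hnb Hmin Hd Hnd.
  pose proof (Z.div_mod d b ltac:(lia)) as Hdm.
  pose proof (Z.mod_pos_bound d b ltac:(lia)) as Hr.
  set (q := (d / b)%Z) in *. set (r := (d mod b)%Z) in *.
  assert (Hq : (Z.abs q <= L)%Z) by nia.
  destruct (Z.eq_dec r 0) as [E|E]; [exists q; lia|exfalso].
  apply (Hmin r ltac:(lia)).
  replace r with (d - q * b)%Z by lia.
  eapply near_int_weaken; [|exact (near_int_sub_mul t e e d b q Hnd Hnb)].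
  rewrite plus_IZR. pose proof (IZR_le _ _ Hq). nra.
Qed.

(* If every level [j <= L] were nonempty and each of its members had a smaller member
   at level [j + 1], level [j] would contain some [d <= L - j]; impossible at [j = L]. *)
Lemma pigeonhole_levels (L : nat) (P : nat -> Z -> Prop) :
  (forall j d, P j d -> (1 <= d <= Z.of_nat L)%Z) ->
  exists j, (j <= L)%nat /\
    ((forall d, ~ P j d) \/ exists b, P j b /\ forall d, P (S j) d -> (b <= d)%Z).
Proof.
  intros Hb. apply NNPP. intros Hn.
  assert (Hdesc : forall j, (j <= L)%nat -> (exists d, P j d) /\
            forall b, P j b -> exists d, P (S j) d /\ (d < b)%Z).
  { intros j Hj. split.
    - apply NNPP; intros Hc. apply Hn. exists j. split; auto. left. intros d Hd. apply Hc. eauto.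
    - intros b Hbj. apply NNPP; intros Hc. apply Hn. exists j. split; auto. right.
      exists b. split; auto. intros d Hd. apply Z.nlt_ge. intros Hlt. apply Hc. eauto. }
  assert (Hsmall : forall j, (j <= L)%nat ->
            exists d, P j d /\ (d <= Z.of_nat L - Z.of_nat j)%Z).
  { induction j as [|j IH]; intros Hj.
    - destruct (proj1 (Hdesc 0%nat Hj)) as [d Hd]. exists d. split; auto.
      specialize (Hb _ _ Hd). lia.
    - destruct IH as [d [Hd Hdl]]; [lia|].
      destruct (proj2 (Hdesc j ltac:(lia)) d Hd) as [d' [Hd' Hlt]].
      exists d'. split; auto. lia. }
  destruct (Hsmall L (le_n _)) as [d [Hd Hdl]]. specialize (Hb _ _ Hd). lia.
Qed.

(* Run through the scales [e (L+1)^j], [j = 0..L], and stop at one where the least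
   near-integer multiple [b] of [t] does not decrease at the next scale. *)
Lemma near_int_common_divisor_scale (L : Z) (delta : R) : (1 <= L)%Z -> 0 < delta ->
  exists e, 0 < e /\ forall t, exists b,
    (b = 0%Z \/ near_int t delta b) /\
    forall d, (Z.abs d <= L)%Z -> near_int t e d -> (b | d)%Z.
Proof.
  intros HL Hdelta.
  set (A := IZR (L + 1)).
  assert (HA : 1 <= A) by (apply IZR_le; lia).
  set (LN := Z.to_nat L).
  assert (HLN : Z.of_nat LN = L) by (unfold LN; rewrite Z2Nat.id; lia).
  assert (HAL : 1 <= A ^ LN) by (apply pow_R1_Rle; lra).
  set (e := delta / A ^ LN).
  assert (He : 0 < e) by (apply Rdiv_lt_0_compat; lra).
  exists e. split; auto. intros t.
  set (eps := fun j : nat => e * A ^ j).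
  assert (Heps_ge : forall j, e <= eps j)
    by (intros j; unfold eps; pose proof (pow_R1_Rle A j HA); nra).
  assert (Heps_le : forall j, (j <= LN)%nat -> eps j <= delta).
  { intros j Hj. unfold eps, e. pose proof (Rle_pow A j LN HA Hj).
    apply Rmult_le_reg_r with (A ^ LN); [lra|]. field_simplify; nra. }
  set (P := fun j d => (1 <= d <= L)%Z /\ near_int t (eps j) d).
  destruct (pigeonhole_levels LN P) as [j [Hj [Hempty | [b [[Hb Hnb] Hmin]]]]].
  { intros j d [Hd _]. lia. }
  - exists 0%Z. split; auto. intros d Hd Hnd.
    destruct (Z.lt_trichotomy d 0) as [Hneg | [-> | Hpos]].
    + exfalso. apply (Hempty (- d)%Z). split; [lia|].
      apply near_int_opp. eapply near_int_weaken; eauto.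
    + apply Z.divide_refl.
    + exfalso. apply (Hempty d). split; [lia|]. eapply near_int_weaken; eauto.
  - exists b. split; [right; eapply near_int_weaken; eauto|].
    intros d Hd Hnd. apply (near_int_divides t L (eps j)); auto.
    + unfold eps. pose proof (pow_le A j ltac:(lra)). nra.
    + intros r Hr Hnr.
      assert (HP : P (S j) r).
      { split; [lia|]. unfold eps; simpl. rewrite <- Rmult_assoc, (Rmult_comm e A), Rmult_assoc.
        exact Hnr. }
      specialize (Hmin r HP). lia.
    + eapply near_int_weaken; eauto.
Qed.

(* For [|t| <= 1/(2L)] only [d = 0] qualifies; otherwise [t] is [1/(2L)]-far from the
   integers, so the [b] of the previous lemma is not [1] or [-1]. *)
Lemma near_int_common_divisor (L : Z) : (1 <= L)%Z ->
  exists e, 0 < e /\ forall t, Rabs t <= 1/2 -> exists b, b <> 1%Z /\ b <> (-1)%Z /\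
    forall d, (Z.abs d <= L)%Z -> near_int t (e * Rabs t) d -> (b | d)%Z.
Proof.
  intros HL. pose proof (IZR_le 1 L HL) as HLr.
  destruct (near_int_common_divisor_scale L (/ (2 * IZR L)) HL) as [e0 [He0 Hb]].
  { apply Rinv_0_lt_compat; lra. }
  exists (Rmin e0 1). split; [apply Rmin_glb_lt; lra|]. intros t Ht.
  pose proof (Rmin_l e0 1). pose proof (Rmin_r e0 1). pose proof (Rabs_pos t).
  destruct (Rle_lt_dec (Rabs t * (2 * IZR L)) 1) as [Hsmall|Hlarge].
  - exists 0%Z. split; [lia|split; [lia|]]. intros d Hd [n Hn].
    destruct (Z.eq_dec d 0) as [->|Hd0]; [apply Z.divide_refl|exfalso].
    assert (Hd1 : 1 <= Rabs (IZR d)) by (rewrite <- abs_IZR; apply IZR_le; lia).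
    assert (HdL : Rabs (IZR d) <= IZR L) by (rewrite <- abs_IZR; apply IZR_le; lia).
    assert (Hdt : Rabs (IZR d * t) <= 1/2) by (rewrite Rabs_mult; nra).
    pose proof (Rabs_le_dist_int (IZR d * t) n Hdt).
    rewrite Rabs_mult in *. nra.
  - assert (Hfar : forall n, / (2 * IZR L) < Rabs (t - IZR n)).
    { intros n. pose proof (Rabs_le_dist_int t n Ht).
      apply Rmult_lt_reg_r with (2 * IZR L); [lra|]. rewrite Rinv_l; nra. }
    destruct (Hb t) as [b [Hbnear Hdiv]]. exists b.
    assert (Hnot1 : ~ near_int t (/ (2 * IZR L)) 1).
    { intros [n Hn]. rewrite Rmult_1_l in Hn. specialize (Hfar n). lra. }
    split; [|split].
    + intros ->. destruct Hbnear as [|Hbn]; [lia|]. exact (Hnot1 Hbn).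
    + intros ->. destruct Hbnear as [|Hbn]; [lia|]. exact (Hnot1 (near_int_opp _ _ _ Hbn)).
    + intros d Hd Hnd. apply Hdiv; auto. eapply near_int_weaken; [|exact Hnd]. nra.
Qed.

Lemma near_int_sub_of_close t phi e k k0 n n0 :
  Rabs (IZR k * t - phi - IZR n) < e -> Rabs (IZR k0 * t - phi - IZR n0) < e ->
  near_int t (2 * e) (k - k0).
Proof.
  intros Hk Hk0. exists (n - n0)%Z. rewrite !minus_IZR.
  replace ((IZR k - IZR k0) * t - (IZR n - IZR n0))
    with ((IZR k * t - phi - IZR n) - (IZR k0 * t - phi - IZR n0)) by ring.
  eapply Rle_lt_trans; [apply Rabs_triang|]. rewrite Rabs_Ropp. lra.
Qed.

(* The [k] with [k t] close to [phi] mod 1 have near-integer differences, hence all lie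
   in one coset [b Z + r]. *)
Lemma coset_separation (M : Z) : (1 <= M)%Z -> exists e1, 0 < e1 /\
  forall t phi, Rabs t <= 1/2 -> exists b r, b <> 1%Z /\ b <> (-1)%Z /\
    forall k, (Z.abs k <= M)%Z ->
      (b | k - r)%Z \/ forall n : Z, e1 * Rabs t <= Rabs (IZR k * t - phi - IZR n).
Proof.
  intros HM. destruct (near_int_common_divisor (2 * M) ltac:(lia)) as [e [He Hdiv]].
  exists (e / 2). split; [lra|]. intros t phi Ht.
  destruct (Hdiv t Ht) as [b [Hb1 [Hb2 Hb]]].
  set (close k := exists n : Z, Rabs (IZR k * t - phi - IZR n) < e / 2 * Rabs t).
  assert (Hfar : forall k, ~ close k -> forall n : Z, e / 2 * Rabs t <= Rabs (IZR k * t - phi - IZR n))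
    by (intros k Hk n; apply Rnot_lt_le; intros Hn; apply Hk; exists n; exact Hn).
  destruct (classic (exists k0, (Z.abs k0 <= M)%Z /\ close k0)) as [[k0 [Hk0 [n0 Hn0]]]|Hnone].
  - exists b, k0. do 2 (split; auto). intros k Hk.
    destruct (classic (close k)) as [[n Hn]|Hc]; [left|right; auto].
    apply Hb; [lia|]. replace (e * Rabs t) with (2 * (e / 2 * Rabs t)) by field.
    exact (near_int_sub_of_close t phi _ k k0 n n0 Hn Hn0).
  - exists b, 0%Z. do 2 (split; auto). intros k Hk. right. apply Hfar.
    intros Hc. apply Hnone. exists k. auto.
Qed.

Lemma fourier_summable nu t : prob_measure_Z nu ->
  exists re im, has_zsum (fourier_re nu t) re /\ has_zsum (fourier_im nu t) im.
Proof.
  intros Hnu. pose proof (proj1 Hnu) as Hnn.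
  assert (Hdom : forall k x, -1 <= x <= 1 -> Rabs (nu k * x) <= nu k).
  { intros k x Hx. rewrite Rabs_mult, (Rabs_pos_eq (nu k)) by auto.
    rewrite <- (Rmult_1_r (nu k)) at 2. apply Rmult_le_compat_l; auto. apply Rabs_le; auto. }
  destruct (has_zsum_dominated (fourier_re nu t) nu Hnu) as [re Hre].
  { intros k. apply Hdom, COS_bound. }
  destruct (has_zsum_dominated (fourier_im nu t) nu Hnu) as [im Him].
  { intros k. apply Hdom, SIN_bound. }
  exists re, im. auto.
Qed.

(* [2 pi phi] is the phase of [hat nu(t)]. *)
Lemma one_sub_fourier_abs_sum nu t re im : prob_measure_Z nu ->
  has_zsum (fourier_re nu t) re -> has_zsum (fourier_im nu t) im ->
  exists phi, has_zsum (fun k => nu k * (1 - cos (2 * PI * (IZR k * t - phi))))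
                       (1 - sqrt (re ^ 2 + im ^ 2)).
Proof.
  intros [_ Hs] Hre Him. destruct (exists_phase re im) as [th Hth].
  exists (th / (2 * PI)). rewrite <- Hth.
  replace (1 - (cos th * re + sin th * im)) with (1 - cos th * re - sin th * im) by ring.
  eapply Un_cv_ext; [|exact (has_zsum_minus_scal _ _ _ _ _ (has_zsum_minus_scal _ _ _ _ _ Hs Hre) Him)].
  intros n. simpl. apply zpartial_ext. intros k. unfold fourier_re, fourier_im.
  pose proof PI_RGT_0.
  replace (2 * PI * (IZR k * t - th / (2 * PI))) with (2 * PI * IZR k * t - th) by (field; lra).
  rewrite cos_minus. ring.
Qed.

Lemma markov_mass nu m1 M : prob_measure_Z nu -> first_moment nu m1 ->
  1 - m1 / (INR M + 1) <= zpartial nu M.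
Proof.
  intros [Hnn Hs] Hm1. pose proof (pos_INR M).
  assert (Hmom : forall k, 0 <= Rabs (IZR k) * nu k)
    by (intros k; apply Rmult_le_pos; [apply Rabs_pos|auto]).
  set (g := fun k => / (INR M + 1) * (Rabs (IZR k) * nu k)).
  assert (Hinv : 0 < / (INR M + 1)) by (apply Rinv_0_lt_compat; lra).
  assert (Hg : forall k, 0 <= g k) by (intros k; unfold g; pose proof (Hmom k); nra).
  assert (Hgm : forall N, zpartial g N <= m1 / (INR M + 1)).
  { intros N. unfold g. rewrite zpartial_scal, Rmult_comm. apply Rmult_le_compat_r; [lra|].
    apply zpartial_le_has_zsum; auto. }
  assert (1 <= zpartial nu M + m1 / (INR M + 1)); [|lra].
  apply (has_zsum_le_bound nu); auto. intros N. destruct (le_lt_dec M N) as [HMN|HNM].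
  - pose proof (zpartial_nonneg g M Hg). pose proof (Hgm N).
    assert (zpartial nu N - zpartial nu M <= zpartial g N - zpartial g M); [|lra].
    apply zpartial_sub_le_outside; auto. intros k Hk. unfold g.
    assert (INR M + 1 <= Rabs (IZR k)).
    { rewrite <- abs_IZR, INR_IZR_INZ, <- plus_IZR. apply IZR_le. lia. }
    apply Rmult_le_reg_l with (INR M + 1); [lra|].
    rewrite <- Rmult_assoc, Rinv_r, Rmult_1_l by lra. pose proof (Hnn k). nra.
  - pose proof (zpartial_mono nu N M Hnn ltac:(lia)).
    pose proof (has_zsum_nonneg _ _ Hmom Hm1).
    assert (0 <= m1 / (INR M + 1)) by (unfold Rdiv; nra). lra.
Qed.

Lemma fourier_abs_le_of_separation nu t re im rho e (M : nat) : prob_measure_Z nu -> 0 <= e ->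
  has_zsum (fourier_re nu t) re -> has_zsum (fourier_im nu t) im ->
  (forall phi, exists b r, (forall m, coset_mass nu b r m -> m <= rho) /\
     forall k, (Z.abs k <= Z.of_nat M)%Z ->
       (b | k - r)%Z \/ forall n : Z, e <= Rabs (IZR k * t - phi - IZR n)) ->
  sqrt (re ^ 2 + im ^ 2) <= 1 - 2 * e ^ 2 * (zpartial nu M - rho).
Proof.
  intros Hnu He Hre Him Hsep. pose proof Hnu as [Hnn Hs].
  destruct (one_sub_fourier_abs_sum nu t re im Hnu Hre Him) as [phi Hh].
  set (h := fun k => nu k * (1 - cos (2 * PI * (IZR k * t - phi)))) in Hh.
  assert (Hhnn : forall k, 0 <= h k).
  { intros k. unfold h. pose proof (COS_bound (2 * PI * (IZR k * t - phi))).
    pose proof (Hnn k). nra. }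
  destruct (Hsep phi) as [b [r [Hrho Hbr]]].
  set (cr := coset_restrict nu b r).
  assert (Hcr : forall k, 0 <= cr k <= nu k)
    by (intros k; unfold cr, coset_restrict; destruct Zdivide_dec; pose proof (Hnn k); lra).
  destruct (has_zsum_of_bounded cr 1) as [mc Hmc].
  { intros k. apply Hcr. }
  { intros N. apply Rle_trans with (zpartial nu N).
    - apply zpartial_le. intros k. apply Hcr.
    - apply zpartial_le_has_zsum; auto. }
  assert (Hmc_rho : zpartial cr M <= rho).
  { apply Rle_trans with mc; [|exact (Hrho mc Hmc)].
    apply zpartial_le_has_zsum; auto. intros k. apply Hcr. }
  assert (Hpt : forall k, (Z.abs k <= Z.of_nat M)%Z -> 2 * e ^ 2 * (nu k - cr k) <= h k).
  { intros k Hk. pose proof (Hcr k). pose proof (Hhnn k). pose proof (pow2_ge_0 e).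
    destruct (Hbr k Hk) as [Hdiv|Hfar].
    - unfold cr, coset_restrict. destruct Zdivide_dec; [|contradiction]. nra.
    - pose proof (one_sub_cos_ge (IZR k * t - phi) e He Hfar). unfold h. nra. }
  pose proof (zpartial_le_on _ _ M Hpt) as Hsum.
  rewrite zpartial_scal, zpartial_minus in Hsum.
  pose proof (zpartial_le_has_zsum h _ M Hhnn Hh). pose proof (pow2_ge_0 e). nra.
Qed.

Lemma exists_nat_div_succ_le a eps : 0 < a -> 0 < eps ->
  exists M : nat, (1 <= M)%nat /\ a / (INR M + 1) <= eps.
Proof.
  intros Ha Heps. destruct (INR_unbounded (a / eps)) as [M HM].
  assert (Hpos : 0 < a / eps) by (apply Rdiv_lt_0_compat; auto).
  exists M. split.
  - destruct M; [simpl in HM; lra|lia].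
  - pose proof (pos_INR M). apply Rmult_le_reg_r with (INR M + 1); [lra|].
    unfold Rdiv in *. rewrite Rmult_assoc, Rinv_l by lra.
    apply Rmult_lt_compat_r with (r := eps) in HM; auto.
    rewrite Rmult_assoc, Rinv_l in HM by lra. lra.
Qed.

Theorem theorem3p3 (a rho : R) (ha : 0 < a) (hrho0 : 0 <= rho) (hrho1 : rho < 1) :
  exists c : R, 0 < c /\
    forall nu : Z -> R,
      prob_measure_Z nu ->
      (exists m1, first_moment nu m1 /\ m1 <= a) ->
      (forall (beta r : Z), beta <> 1%Z -> beta <> (-1)%Z ->
         forall m, coset_mass nu beta r m -> m <= rho) ->
      forall t : R, -(1/2) < t -> t <= 1/2 ->
        exists re im : R,
          has_zsum (fourier_re nu t) re /\ has_zsum (fourier_im nu t) im /\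
          sqrt (re ^ 2 + im ^ 2) <= exp (- (c * t ^ 2)).
Proof.
  destruct (exists_nat_div_succ_le a ((1 - rho) / 2) ha ltac:(lra)) as [M [HM1 HMa]].
  destruct (coset_separation (Z.of_nat M) ltac:(lia)) as [e1 [He1 Hsep]].
  exists (e1 ^ 2 * (1 - rho)). split; [pose proof (pow_lt e1 2 He1); nra|].
  intros nu Hnu [m1 [Hm1 Hm1a]] Hcoset t Ht1 Ht2.
  destruct (fourier_summable nu t Hnu) as [re [im [Hre Him]]].
  exists re, im. do 2 (split; auto).
  assert (Ht : Rabs t <= 1/2) by (apply Rabs_le; lra).
  pose proof (Rabs_pos t).
  assert (Hmass : (1 + rho) / 2 <= zpartial nu M).
  { pose proof (markov_mass nu m1 M Hnu Hm1). pose proof (pos_INR M).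
    assert (m1 / (INR M + 1) <= a / (INR M + 1))
      by (apply Rmult_le_compat_r; [apply Rlt_le, Rinv_0_lt_compat|]; lra).
    lra. }
  eapply Rle_trans.
  { apply (fourier_abs_le_of_separation nu t re im rho (e1 * Rabs t) M); auto; [nra|].
    intros phi. destruct (Hsep t phi Ht) as [b [r [Hb1 [Hb2 Hb]]]].
    exists b, r. split; [exact (Hcoset b r Hb1 Hb2)|exact Hb]. }
  eapply Rle_trans; [|apply exp_ineq1_le].
  rewrite Rpow_mult_distr, pow2_abs. pose proof (pow2_ge_0 e1). pose proof (pow2_ge_0 t).
  assert (0 <= e1 ^ 2 * t ^ 2) by nra. nra.
Qed.
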